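(* (1) An MT-morphism $f:M\to N$ between $T_0$-algebras is a D-morphism (of MT-algebras) if and only if its restriction $f|_{\mathcal O M}:\mathcal O M\to\mathcal O N$ is a D-morphism of frames. (2) Every MT-morphism between $T_D$-algebras is a D-morphism.
   Context: An MT-algebra is a pair $(M,\square)$ where $M$ is a complete boolean algebra and $\square:M\to M$ satisfies $\square 1=1$, $\square(a\wedge b)=\square a\wedge\square b$, $\square a\le a$, $\square a\le\square\square a$; $\Diamond a=\neg\square\neg a$; open: $\square a=a$; closed: $\Diamond a=a$; locally closed: $a=\square b\wedge\Diamond c$. $\mathcal O M$ is the frame of open elements. Saturated: a meet of opens; weakly locally closed: $s\wedge c$ with $s$ saturated, $c$ closed. $M$ is a $T_0$-algebra if every element is a join of weakly locally closed elements, and a $T_D$-algebra if every element is a join of locally closed elements. An MT-morphism is a complete boolean homomorphism $h:M\to N$ with $h(\square a)\le\square h(a)$; it restricts to a frame morphism $\mathcal O M\to\mathcal O N$ and has a left adjoint $h^*(b)=\bigwedge\{a: b\le h(a)\}$; $h$ is a D-morphism if $h^*$ maps locally closed atoms to locally closed atoms. For a frame and $a<b$, $a\lessdot b$ means no $x$ with $a<x<b$; a filter $F$ is slicing if prime and there are $b\in F$, $a\notin F$ with $a\lessdot b$; a frame morphism $g:L\to K$ is a D-morphism if $g^{-1}(F)$ is slicing for every slicing filter $F$ of $K$. *)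

Definition pair2 {T : Type} (a b : T) : T -> Prop := fun x => x = a \/ x = b.
Definition empty_fam {T : Type} : T -> Prop := fun _ => False.

Record CBA := {
  car :> Type;
  le : car -> car -> Prop;
  sup : (car -> Prop) -> car;
  inf : (car -> Prop) -> car;
  neg : car -> car;
  le_refl : forall x, le x x;
  le_antisym : forall x y, le x y -> le y x -> x = y;
  le_trans : forall x y z, le x y -> le y z -> le x z;
  sup_ub : forall S x, S x -> le x (sup S);
  sup_least : forall S y, (forall x, S x -> le x y) -> le (sup S) y;
  inf_lb : forall S x, S x -> le (inf S) x;
  inf_greatest : forall S y, (forall x, S x -> le y x) -> le y (inf S);
  distr : forall a b c,
    inf (pair2 a (sup (pair2 b c))) = sup (pair2 (inf (pair2 a b)) (inf (pair2 a c)));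
  compl_meet : forall a, inf (pair2 a (neg a)) = sup empty_fam;
  compl_join : forall a, sup (pair2 a (neg a)) = inf empty_fam
}.

Arguments le {c0} _ _ : rename.
Arguments sup {c0} _ : rename.
Arguments inf {c0} _ : rename.
Arguments neg {c0} _ : rename.

Section CBAops.
Context {M : CBA}.
Definition top : M := inf empty_fam.
Definition bot : M := sup empty_fam.
Definition meet (a b : M) : M := inf (pair2 a b).
Definition join (a b : M) : M := sup (pair2 a b).
Definition lt (a b : M) : Prop := le a b /\ a <> b.
Definition atom (a : M) : Prop := a <> bot /\ ~ (exists x, lt bot x /\ lt x a).
End CBAops.

Record MTAlg := {
  cba :> CBA;
  box : cba -> cba;
  box_top : box top = top;
  box_meet : forall a b, box (meet a b) = meet (box a) (box b);
  box_defl : forall a, le (box a) a;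
  box_idem : forall a, le (box a) (box (box a))
}.

Arguments box {m} _.

Section MTnotions.
Context {M : MTAlg}.
Definition dia (a : M) : M := neg (box (neg a)).
Definition is_open (a : M) : Prop := box a = a.
Definition is_closed (a : M) : Prop := dia a = a.
Definition locally_closed (a : M) : Prop := exists b c : M, a = meet (box b) (dia c).
Definition saturated (s : M) : Prop :=
  exists S : M -> Prop, (forall x, S x -> is_open x) /\ s = inf S.
Definition weakly_locally_closed (a : M) : Prop :=
  exists s c : M, saturated s /\ is_closed c /\ a = meet s c.
Definition T0_algebra : Prop :=
  forall a : M, exists S : M -> Prop,
    (forall x, S x -> weakly_locally_closed x) /\ a = sup S.
Definition TD_algebra : Prop :=
  forall a : M, exists S : M -> Prop,
    (forall x, S x -> locally_closed x) /\ a = sup S.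
End MTnotions.

Definition image {A B : Type} (f : A -> B) (S : A -> Prop) : B -> Prop :=
  fun y => exists x, S x /\ y = f x.

Definition complete_bool_hom {M N : CBA} (h : M -> N) : Prop :=
  (forall S, h (sup S) = sup (image h S)) /\
  (forall S, h (inf S) = inf (image h S)) /\
  (forall a, h (neg a) = neg (h a)).

Definition MT_morphism {M N : MTAlg} (h : M -> N) : Prop :=
  complete_bool_hom h /\ forall a : M, le (h (box a)) (box (h a)).

Definition left_adj {M N : MTAlg} (h : M -> N) (b : N) : M :=
  inf (fun a : M => le b (h a)).

Definition D_morphism {M N : MTAlg} (h : M -> N) : Prop :=
  forall b : N, atom b -> locally_closed b ->
    atom (left_adj h b) /\ locally_closed (left_adj h b).

(** * Frame notions, for the frame O M of open elements.
   O M is the subset of open elements of M, with the induced order; its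
   finite meets, binary joins, top and bottom agree with those of M. *)

Section FrameNotions.
Context {M : MTAlg}.
Let S := @is_open M.
Definition covers_O (a b : M) : Prop :=
  lt a b /\ ~ (exists x, S x /\ lt a x /\ lt x b).
Definition filter_O (F : M -> Prop) : Prop :=
  (forall x, F x -> S x) /\ F top /\
  (forall x y, F x -> S y -> le x y -> F y) /\
  (forall x y, F x -> F y -> F (meet x y)).
Definition prime_filter_O (F : M -> Prop) : Prop :=
  filter_O F /\ ~ F bot /\
  (forall x y, S x -> S y -> F (join x y) -> F x \/ F y).
Definition slicing_filter_O (F : M -> Prop) : Prop :=
  prime_filter_O F /\
  exists a b, S a /\ S b /\ F b /\ ~ F a /\ covers_O a b.
End FrameNotions.

Definition restriction_frame_D_morphism {M N : MTAlg} (f : M -> N) : Prop :=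
  forall F : N -> Prop, slicing_filter_O F ->
    slicing_filter_O (fun a : M => is_open a /\ F (f a)).

From Stdlib Require Import Classical FunctionalExtensionality PropExtensionality.

(* In a T0-algebra the slicing filters of the frame of opens are exactly the
   traces on the opens of principal filters of atoms: for a slicing filter
   with a covering pair a ⋖ b, the element d = b ∧ ¬a is not split by any open,
   so by T0 it is an atom, and the filter consists of the opens above d.
   Conversely, the opens above an atom x form a slicing filter iff x is
   locally closed (the "if" needs no separation axiom).  Since the opens
   whose image under f lies above y are the opens above f^*(y), and f^* maps atoms
   to atoms, the two notions of D-morphism coincide.  In a T_D-algebra every
   atom is locally closed, which gives the second part. *)

Arguments le_refl {c0} x.
Arguments le_antisym {c0 x y}.
Arguments le_trans {c0 x} y {z}.
Arguments sup_ub {c0 S x}.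
Arguments sup_least {c0 S y}.
Arguments inf_lb {c0 S x}.
Arguments inf_greatest {c0 S y}.

Section BooleanAlgebra.
Context {M : CBA}.
Implicit Types a b c d e u v w x y z : M.

Lemma meet_l a b : le (meet a b) a. Proof. apply inf_lb; now left. Qed.
Lemma meet_r a b : le (meet a b) b. Proof. apply inf_lb; now right. Qed.
Lemma meet_glb a b z : le z a -> le z b -> le z (meet a b).
Proof. intros; apply inf_greatest; intros w [-> | ->]; assumption. Qed.
Lemma le_meet_iff z a b : le z (meet a b) <-> le z a /\ le z b.
Proof.
  split; [intro H; split; apply (le_trans _ H); [apply meet_l | apply meet_r] |].
  intros []; now apply meet_glb.
Qed.
Lemma join_l a b : le a (join a b). Proof. apply sup_ub; now left. Qed.
Lemma join_r a b : le b (join a b). Proof. apply sup_ub; now right. Qed.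
Lemma join_lub a b z : le a z -> le b z -> le (join a b) z.
Proof. intros; apply sup_least; intros w [-> | ->]; assumption. Qed.

Lemma bot_le x : le bot x. Proof. apply sup_least; intros w []. Qed.
Lemma le_top x : le x top. Proof. apply inf_greatest; intros w []. Qed.
Lemma le_bot_eq x : le x bot -> x = bot.
Proof. intro; apply le_antisym; [assumption | apply bot_le]. Qed.
Lemma ne_bot_le w z : w <> bot -> le w z -> z <> bot.
Proof. intros Hw Hwz ->; apply Hw, le_bot_eq, Hwz. Qed.

Lemma meet_mono a b c d : le a c -> le b d -> le (meet a b) (meet c d).
Proof.
  intros; apply meet_glb; [apply (le_trans a) | apply (le_trans b)];
    auto using meet_l, meet_r.
Qed.
Lemma join_mono a b c d : le a c -> le b d -> le (join a b) (join c d).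
Proof.
  intros; apply join_lub; [apply (le_trans c) | apply (le_trans d)];
    auto using join_l, join_r.
Qed.
Lemma meetC a b : meet a b = meet b a.
Proof. apply le_antisym; apply meet_glb; auto using meet_l, meet_r. Qed.
Lemma joinC a b : join a b = join b a.
Proof. apply le_antisym; apply join_lub; auto using join_l, join_r. Qed.
Lemma meet_eq_l a b : le a b -> meet a b = a.
Proof. intro; apply le_antisym; [apply meet_l | apply meet_glb; auto using le_refl]. Qed.
Lemma meet_top a : meet a top = a.
Proof. apply meet_eq_l, le_top. Qed.

Lemma meet_neg a : meet a (neg a) = bot. Proof. exact (compl_meet M a). Qed.
Lemma join_neg a : join a (neg a) = top. Proof. exact (compl_join M a). Qed.
Lemma meet_joinr a b c : meet a (join b c) = join (meet a b) (meet a c).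
Proof. exact (distr M a b c). Qed.
Lemma join_meet_neg_meet a d : join (meet a (neg d)) (meet a d) = a.
Proof. rewrite <- meet_joinr, joinC, join_neg; apply meet_top. Qed.

Lemma le_of_complement a c d : meet a c = bot -> join a d = top -> le c d.
Proof.
  intros Hac Had.
  rewrite <- (meet_top c), <- Had, meet_joinr, (meetC c a), Hac.
  apply join_lub; [apply bot_le | apply meet_r].
Qed.

Lemma neg_neg a : neg (neg a) = a.
Proof.
  apply le_antisym; apply (le_of_complement (neg a)).
  - apply meet_neg.
  - rewrite joinC; apply join_neg.
  - rewrite meetC; apply meet_neg.
  - apply join_neg.
Qed.

Lemma le_iff_meet_neg x y : le x y <-> meet x (neg y) = bot.
Proof.
  split; intro H.
  - apply le_bot_eq; rewrite <- (meet_neg y); apply meet_mono; [exact H | apply le_refl].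
  - apply (le_of_complement (neg y)); [now rewrite meetC | rewrite joinC; apply join_neg].
Qed.

Lemma neg_anti x y : le x y -> le (neg y) (neg x).
Proof. intro; apply le_iff_meet_neg; rewrite neg_neg, meetC; now apply le_iff_meet_neg. Qed.

Lemma le_join_iff x y z : le x (join y z) <-> le (meet x (neg y)) z.
Proof.
  split; intro H.
  - apply (le_trans (meet (neg y) (join y z))).
    + rewrite meetC; apply meet_mono; [apply le_refl | exact H].
    + rewrite meet_joinr, (meetC (neg y) y), meet_neg.
      apply join_lub; [apply bot_le | apply meet_r].
  - apply (le_trans (meet x (join y (neg y)))).
    + rewrite join_neg, meet_top; apply le_refl.
    + rewrite meet_joinr; apply join_mono; [apply meet_r | exact H].
Qed.

Lemma le_of_le_join_neg w a c : le w (join a (neg c)) -> le w c -> le w a.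
Proof.
  intros H Hc; apply le_join_iff in H.
  apply le_iff_meet_neg, le_bot_eq; rewrite <- (meet_neg c).
  apply meet_glb; [apply (le_trans w); [apply meet_l | exact Hc] | exact H].
Qed.

Lemma le_neg_self x : le x (neg x) -> x = bot.
Proof. intro; rewrite <- (meet_neg x); symmetry; now apply meet_eq_l. Qed.

Lemma sup_ne_bot (S : M -> Prop) : sup S <> bot -> exists w, S w /\ w <> bot.
Proof.
  intro H; apply NNPP; intro Hno; apply H, le_bot_eq, sup_least.
  intros w Sw; destruct (classic (w = bot)) as [-> | Hw]; [apply le_refl |].
  exfalso; apply Hno; now exists w.
Qed.

Lemma atom_of_min d : d <> bot -> (forall e, e <> bot -> le e d -> le d e) -> atom d.
Proof.
  intros Hd Hmin; split; [exact Hd |].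
  intros [e [[_ He] [Hed Hne]]].
  apply Hne, le_antisym; [exact Hed | apply Hmin; [congruence | exact Hed]].
Qed.

Lemma atom_eq_of_le x w : atom x -> w <> bot -> le w x -> w = x.
Proof.
  intros [_ Hmin] Hw Hwx; apply NNPP; intro Hne; apply Hmin.
  exists w; split; split; [apply bot_le | congruence | exact Hwx | exact Hne].
Qed.

Lemma atom_not_le_bot x : atom x -> ~ le x bot.
Proof. intros [Hx _] H; apply Hx, le_bot_eq, H. Qed.

Lemma atom_le_or_le_neg x y : atom x -> le x y \/ le x (neg y).
Proof.
  intro Ha; destruct (classic (meet x y = bot)) as [E | E].
  - right; apply le_iff_meet_neg; now rewrite neg_neg.
  - left; rewrite <- (atom_eq_of_le x (meet x y) Ha E (meet_l x y)); apply meet_r.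
Qed.

Lemma atom_le_join x y z : atom x -> le x (join y z) -> le x y \/ le x z.
Proof.
  intros Ha H; destruct (atom_le_or_le_neg x y Ha) as [Hy | Hy]; [now left | right].
  apply le_join_iff in H; apply (le_trans (meet x (neg y))); [|exact H].
  apply meet_glb; [apply le_refl | exact Hy].
Qed.
End BooleanAlgebra.

Section InteriorAlgebra.
Context {M : MTAlg}.
Implicit Types a b c u v w x : M.

Lemma box_mono a b : le a b -> le (box a) (box b).
Proof. intro H; rewrite <- (meet_eq_l a b H), box_meet; apply meet_r. Qed.
Lemma open_box a : is_open (box a).
Proof. apply le_antisym; [apply box_defl | apply box_idem]. Qed.
Lemma open_top : is_open (@top M).
Proof. exact (box_top M). Qed.
Lemma open_meet u v : is_open u -> is_open v -> is_open (meet u v).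
Proof. unfold is_open; intros; rewrite box_meet; congruence. Qed.
Lemma open_join u v : is_open u -> is_open v -> is_open (join u v).
Proof.
  intros Hu Hv; apply le_antisym; [apply box_defl | apply join_lub].
  - apply (le_trans (box u)); [rewrite Hu; apply le_refl | apply box_mono, join_l].
  - apply (le_trans (box v)); [rewrite Hv; apply le_refl | apply box_mono, join_r].
Qed.

Lemma dia_ext a : le a (dia a).
Proof. unfold dia; rewrite <- (neg_neg a) at 1; apply neg_anti, box_defl. Qed.
Lemma dia_mono a b : le a b -> le (dia a) (dia b).
Proof. intro; unfold dia; apply neg_anti, box_mono, neg_anti; assumption. Qed.
Lemma dia_dia_le a : le (dia (dia a)) (dia a).
Proof. unfold dia; rewrite neg_neg; apply neg_anti, box_idem. Qed.

Lemma closed_neg u : is_open u -> is_closed (neg u).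
Proof. intro Hu; unfold is_closed, dia; now rewrite neg_neg, Hu. Qed.
Lemma open_neg c : is_closed c -> is_open (neg c).
Proof. intro Hc; unfold is_open; now rewrite <- (neg_neg (box (neg c))), Hc. Qed.

Lemma locally_closed_iff x :
  locally_closed x <-> exists u, is_open u /\ x = meet u (dia x).
Proof.
  split.
  - intros [b [c Hx]]; exists (box b); split; [apply open_box |].
    apply le_antisym.
    + apply meet_glb; [rewrite Hx; apply meet_l | apply dia_ext].
    + rewrite Hx at 2; apply meet_mono; [apply le_refl |].
      apply (le_trans (dia (dia c))); [apply dia_mono | apply dia_dia_le].
      rewrite Hx; apply meet_r.
  - intros [u [Hu Hx]]; exists u, x; now rewrite Hu.
Qed.

Lemma atom_le_open x u : atom x -> is_open u -> meet u (dia x) <> bot -> le x u.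
Proof.
  intros Ha Hu Hne; destruct (atom_le_or_le_neg x u Ha) as [H | H]; [exact H |].
  exfalso; apply Hne, le_bot_eq; rewrite <- (meet_neg u).
  apply meet_mono; [apply le_refl |].
  rewrite <- (closed_neg u Hu); apply dia_mono, H.
Qed.

Lemma atom_le_saturated x s w :
  atom x -> saturated s -> w <> bot -> le w s -> le w (dia x) -> le x s.
Proof.
  intros Ha [T [HT ->]] Hw Hws Hwx; apply inf_greatest; intros u Tu.
  apply atom_le_open; [exact Ha | now apply HT |].
  apply (ne_bot_le w _ Hw), meet_glb; [apply (le_trans _ Hws), inf_lb, Tu | exact Hwx].
Qed.

Lemma TD_atom_locally_closed (TD : @TD_algebra M) x : atom x -> locally_closed x.
Proof.
  intro Ha; destruct (TD x) as [S [HS Hx]].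
  destruct (sup_ne_bot S) as [w [Sw Hw]]; [rewrite <- Hx; exact (proj1 Ha) |].
  rewrite <- (atom_eq_of_le x w Ha Hw); [now apply HS | rewrite Hx; now apply sup_ub].
Qed.
End InteriorAlgebra.

Definition open_filter {M : MTAlg} (x : M) : M -> Prop := fun u => is_open u /\ le x u.

Section OpenFilters.
Context {M : MTAlg}.
Implicit Types a b c d u v w x : M.

Lemma covers_O_cases a b v :
  covers_O a b -> is_open v -> le a v -> le v b -> v = a \/ v = b.
Proof.
  intros [_ Hcov] Hv Hav Hvb.
  destruct (classic (v = a)) as [Ea | Ea]; [now left |].
  destruct (classic (v = b)) as [Eb | Eb]; [now right |].
  exfalso; apply Hcov; exists v.
  split; [exact Hv | split; split; [exact Hav | congruence | exact Hvb | exact Eb]].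
Qed.

Lemma covers_O_of_atom x a q :
  atom x -> le a q -> le x q -> ~ le x a -> le q (join a x) -> covers_O a q.
Proof.
  intros Ha Haq Hxq Hxa Hqax.
  split; [split; [exact Haq | intros <-; exact (Hxa Hxq)] |].
  intros [v [_ [[Hav Hnav] [Hvq Hnvq]]]].
  destruct (atom_le_or_le_neg x v Ha) as [Hxv | Hxv].
  - apply Hnvq, le_antisym; [exact Hvq |].
    apply (le_trans _ Hqax), join_lub; assumption.
  - apply Hnav, le_antisym; [exact Hav |].
    apply (le_trans (meet v (neg x))).
    + apply meet_glb; [apply le_refl | rewrite <- (neg_neg v); now apply neg_anti].
    + apply le_join_iff; rewrite joinC; exact (le_trans q Hvq Hqax).
Qed.

Lemma open_filter_prime x : atom x -> prime_filter_O (open_filter x).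
Proof.
  intro Ha; split; [split; [| split; [| split]] | split].
  - now intros u [Hu _].
  - split; [apply open_top | apply le_top].
  - intros u v [_ Hxu] Hv Huv; split; [exact Hv | exact (le_trans u Hxu Huv)].
  - intros u v [Hu Hxu] [Hv Hxv]; split; [now apply open_meet | now apply meet_glb].
  - intros [_ H]; exact (atom_not_le_bot x Ha H).
  - intros u v Hu Hv [_ H].
    destruct (atom_le_join x u v Ha H); [left | right]; split; assumption.
Qed.

(* For x = u ∧ ◇x, the open u ∧ ¬◇x is covered by u, the gap being x. *)
Lemma open_filter_slicing x : atom x -> locally_closed x -> slicing_filter_O (open_filter x).
Proof.
  intros Ha Hlc; apply locally_closed_iff in Hlc as [u [Hu Hx]].
  split; [now apply open_filter_prime |].
  assert (Hxu : le x u) by (rewrite Hx; apply meet_l).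
  assert (Hxa : ~ le x (meet u (neg (dia x)))).
  { intro H; apply (atom_not_le_bot x Ha); rewrite <- (meet_neg (dia x)).
    apply meet_glb; [apply dia_ext | apply (le_trans _ H), meet_r]. }
  assert (Ha_open : is_open (meet u (neg (dia x))))
    by (apply open_meet; [exact Hu | unfold dia; rewrite neg_neg; apply open_box]).
  exists (meet u (neg (dia x))), u.
  split; [exact Ha_open | split; [exact Hu | split; [split; assumption | split]]].
  - intros [_ H]; exact (Hxa H).
  - apply (covers_O_of_atom x); [exact Ha | apply meet_l | exact Hxu | exact Hxa |].
    rewrite <- (join_meet_neg_meet u (dia x)) at 1; rewrite <- Hx; apply le_refl.
Qed.

(* Across a covering pair a ⋖ b of opens, every open u either contains
   b ∧ ¬a or is disjoint from it, according as a ∨ (b ∧ u) is b or a. *)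
Lemma covers_O_diff_decides_opens a b u :
  covers_O a b -> is_open a -> is_open b -> is_open u ->
  le (meet b (neg a)) u \/ le (meet b (neg a)) (neg u).
Proof.
  intros Hcov Ha Hb Hu.
  assert (Hv : is_open (join a (meet b u)))
    by (apply open_join; [exact Ha | now apply open_meet]).
  assert (Hvb : le (join a (meet b u)) b)
    by (apply join_lub; [exact (proj1 (proj1 Hcov)) | apply meet_l]).
  destruct (covers_O_cases a b _ Hcov Hv (join_l _ _) Hvb) as [E | E].
  - right; apply le_iff_meet_neg; rewrite neg_neg.
    apply le_bot_eq; rewrite <- (meet_neg a); apply meet_glb.
    + rewrite <- E at 2; apply (le_trans (meet b u)); [|apply join_r].
      apply meet_mono; [apply meet_l | apply le_refl].
    + apply (le_trans (meet b (neg a))); apply meet_l || apply meet_r.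
  - left; apply le_join_iff; rewrite <- E at 1.
    apply join_mono; [apply le_refl | apply meet_r].
Qed.
End OpenFilters.

Section T0Algebra.
Context {M : MTAlg} (T0 : @T0_algebra M).
Implicit Types a b c d e u w x : M.

Lemma T0_exists_wlc_le z :
  z <> bot -> exists w, weakly_locally_closed w /\ w <> bot /\ le w z.
Proof.
  intro Hz; destruct (T0 z) as [S [HS ->]].
  destruct (sup_ne_bot S Hz) as [w [Sw Hw]].
  exists w; split; [now apply HS | split; [exact Hw | now apply sup_ub]].
Qed.

Lemma atom_of_opens_decide d :
  d <> bot -> (forall u, is_open u -> le d u \/ le d (neg u)) -> atom d.
Proof.
  intros Hd Hdec; apply atom_of_min; [exact Hd |]; intros e He Hed.
  destruct (T0_exists_wlc_le e He) as [w [[s [c [[T [HT Hs]] [Hc Hwsc]]]] [Hw Hwe]]].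
  apply (le_trans w); [| exact Hwe].
  assert (Hwd : le w d) by exact (le_trans e Hwe Hed).
  assert (Hside : forall y, le d y \/ le d (neg y) -> le w y -> le d y).
  { intros y [H | H] Hwy; [exact H | exfalso].
    apply Hw, le_bot_eq; rewrite <- (meet_neg y).
    apply meet_glb; [exact Hwy | exact (le_trans d Hwd H)]. }
  rewrite Hwsc; apply meet_glb.
  - rewrite Hs; apply inf_greatest; intros u Tu.
    apply Hside; [now apply Hdec, HT |].
    apply (le_trans s); [rewrite Hwsc; apply meet_l | rewrite Hs; now apply inf_lb].
  - apply Hside; [| rewrite Hwsc; apply meet_r].
    pose proof (Hdec (neg c) (open_neg c Hc)) as H; rewrite neg_neg in H; tauto.
Qed.

Lemma slicing_filter_open_filter (G : M -> Prop) :
  slicing_filter_O G -> exists d, atom d /\ G = open_filter d.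
Proof.
  intros [[[HGo [_ [HGup HGmeet]]] [_ HGprime]] [a [b [Ha [Hb [HGb [HGa Hcov]]]]]]].
  set (d := meet b (neg a)).
  assert (Hd : d <> bot).
  { intro E; apply (proj2 (proj1 Hcov)), le_antisym; [exact (proj1 (proj1 Hcov)) |].
    now apply le_iff_meet_neg. }
  exists d; split.
  { apply atom_of_opens_decide; [exact Hd |].
    intros u Hu; exact (covers_O_diff_decides_opens a b u Hcov Ha Hb Hu). }
  apply functional_extensionality; intro u; apply propositional_extensionality; split.
  - intro HGu; split; [now apply HGo |].
    destruct (covers_O_diff_decides_opens a b u Hcov Ha Hb (HGo u HGu)) as [H | H];
      [exact H | exfalso].
    apply HGa, (HGup (meet u b)); [now apply HGmeet | exact Ha |].
    apply le_iff_meet_neg, le_bot_eq; rewrite <- (meet_neg u); apply meet_glb.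
    + apply (le_trans (meet u b)); apply meet_l.
    + apply (le_trans d); [apply meet_mono; [apply meet_r | apply le_refl] | exact H].
  - intros [Hu Hdu].
    assert (HGj : G (join a u))
      by (apply (HGup b); [exact HGb | now apply open_join | now apply le_join_iff]).
    destruct (HGprime a u Ha Hu HGj) as [H | H]; [contradiction | exact H].
Qed.

Lemma locally_closed_of_open_filter_slicing x :
  atom x -> slicing_filter_O (open_filter x) -> locally_closed x.
Proof.
  intros Ha [_ [a [b [Ha_open [Hb [[_ Hxb] [HFa Hcov]]]]]]].
  assert (Hxa : ~ le x a) by (intro; apply HFa; split; assumption).
  assert (Hz : meet (meet b (dia x)) (neg x) = bot).
  { apply NNPP; intro Hz.
    destruct (T0_exists_wlc_le _ Hz) as [w [[s [c [Hs [Hc Hwsc]]]] [Hw Hwz]]].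
    destruct (proj1 (le_meet_iff _ _ _) Hwz) as [Hwbd Hwnx].
    destruct (proj1 (le_meet_iff _ _ _) Hwbd) as [Hwb Hwdx].
    assert (Hws : le w s) by (rewrite Hwsc; apply meet_l).
    assert (Hwc : le w c) by (rewrite Hwsc; apply meet_r).
    assert (Hxs : le x s) by exact (atom_le_saturated x s w Ha Hs Hw Hws Hwdx).
    assert (Hxc : le x (neg c)).
    { destruct (atom_le_or_le_neg x c Ha) as [H | H]; [exfalso | exact H].
      apply (proj1 Ha), le_neg_self, (le_trans w); [| exact Hwnx].
      rewrite Hwsc; now apply meet_glb. }
    (* the open a ∨ (b ∧ ¬c) lies between a and b and contains x, so it is b *)
    set (v := join a (meet b (neg c))).
    assert (Hv : v = b).
    { assert (Hv_open : is_open v) by (apply open_join;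
        [exact Ha_open | apply open_meet; [exact Hb | now apply open_neg]]).
      assert (Hvb : le v b)
        by (apply join_lub; [exact (proj1 (proj1 Hcov)) | apply meet_l]).
      destruct (covers_O_cases a b v Hcov Hv_open (join_l _ _) Hvb) as [E | E];
        [exfalso | exact E].
      apply Hxa; rewrite <- E; unfold v.
      apply (le_trans (meet b (neg c))); [now apply meet_glb | apply join_r]. }
    assert (Hwa : le w a).
    { apply (le_of_le_join_neg w a c); [| exact Hwc].
      rewrite <- Hv in Hwb; apply (le_trans _ Hwb); unfold v.
      apply join_mono; [apply le_refl | apply meet_r]. }
    apply Hxa, (atom_le_open x a Ha Ha_open), (ne_bot_le w _ Hw), meet_glb; assumption. }
  apply locally_closed_iff; exists b; split; [exact Hb |].
  apply le_antisym; [apply meet_glb; [exact Hxb | apply dia_ext] |].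
  now apply le_iff_meet_neg.
Qed.
End T0Algebra.

Section Morphisms.
Context {M N : MTAlg} (h : M -> N) (Hh : complete_bool_hom h).

Lemma hom_bot : h bot = bot.
Proof.
  destruct Hh as [Hsup _]; unfold bot at 1; rewrite Hsup.
  apply le_bot_eq, sup_least; intros y [x [[] _]].
Qed.

Lemma hom_mono a b : le a b -> le (h a) (h b).
Proof.
  intro H; destruct Hh as [_ [Hinf _]].
  rewrite <- (meet_eq_l a b H); unfold meet; rewrite Hinf.
  apply inf_lb; exists b; split; [now right | reflexivity].
Qed.

Lemma le_hom_left_adj y : le y (h (left_adj h y)).
Proof.
  destruct Hh as [_ [Hinf _]]; unfold left_adj; rewrite Hinf.
  apply inf_greatest; intros z [x [Hx ->]]; exact Hx.
Qed.

Lemma left_adj_galois y u : le y (h u) <-> le (left_adj h y) u.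
Proof.
  split; intro H; [now apply inf_lb |].
  apply (le_trans _ (le_hom_left_adj y)), hom_mono, H.
Qed.

Lemma atom_left_adj y : atom y -> atom (left_adj h y).
Proof.
  intro Hy; pose proof Hh as [_ [_ Hneg]]; split.
  - intro E; apply (atom_not_le_bot y Hy).
    rewrite <- hom_bot, <- E; apply le_hom_left_adj.
  - intros [x [[_ Hx] [Hxl Hnxl]]].
    destruct (atom_le_or_le_neg y (h x) Hy) as [H | H].
    + apply Hnxl, le_antisym; [exact Hxl | now apply left_adj_galois].
    + rewrite <- Hneg in H; apply left_adj_galois in H.
      apply Hx; symmetry; apply le_neg_self, (le_trans _ Hxl H).
Qed.
End Morphisms.

Lemma MT_morphism_open {M N : MTAlg} (f : M -> N) (u : M) :
  MT_morphism f -> is_open u -> is_open (f u).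
Proof.
  intros [_ Hbox] Hu; apply le_antisym; [apply box_defl |].
  rewrite <- Hu at 1; apply Hbox.
Qed.

Lemma preimage_open_filter {M N : MTAlg} (f : M -> N) (y : N) :
  MT_morphism f ->
  (fun a : M => is_open a /\ open_filter y (f a)) = open_filter (left_adj f y).
Proof.
  intro Hf; apply functional_extensionality; intro u; apply propositional_extensionality.
  split.
  - intros [Hu [_ H]]; split; [exact Hu | now apply (left_adj_galois f (proj1 Hf))].
  - intros [Hu H]; split; [exact Hu | split; [now apply MT_morphism_open |]].
    now apply (left_adj_galois f (proj1 Hf)).
Qed.

Theorem proposition5p16 :
  (forall (M N : MTAlg) (f : M -> N),
      @T0_algebra M -> @T0_algebra N -> MT_morphism f ->
      (D_morphism f <-> restriction_frame_D_morphism f)) /\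
  (forall (M N : MTAlg) (f : M -> N),
      @TD_algebra M -> @TD_algebra N -> MT_morphism f -> D_morphism f).
Proof.
  split.
  - intros M N f T0M T0N Hf; split.
    + intros HD F HF.
      destruct (slicing_filter_open_filter T0N F HF) as [y [Hy ->]].
      pose proof (locally_closed_of_open_filter_slicing T0N y Hy HF) as Hylc.
      destruct (HD y Hy Hylc) as [Hx Hxlc].
      rewrite (preimage_open_filter f y Hf); now apply open_filter_slicing.
    + intros HR y Hy Hylc.
      pose proof (atom_left_adj f (proj1 Hf) y Hy) as Hx; split; [exact Hx |].
      apply (locally_closed_of_open_filter_slicing T0M); [exact Hx |].
      rewrite <- (preimage_open_filter f y Hf).
      apply (HR (open_filter y)), open_filter_slicing; assumption.
  - intros M N f TDM _ Hf y Hy _.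
    pose proof (atom_left_adj f (proj1 Hf) y Hy) as Hx.
    split; [exact Hx | exact (TD_atom_locally_closed TDM _ Hx)].
Qed.
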